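(* Let $X$ be a Tychonoff space such that every compact subset of $X$ is countable. If $C_c(X)$ is a weakly $\aleph$-space, then $X$ is separable. In particular, $C_c([0,\omega_1))$ is not a weakly $\aleph$-space, where $[0,\omega_1)$ is the space of countable ordinals with the order topology.
   Context: $C_c(X)$ is the space of continuous real functions on $X$ with the compact-open topology. A $k$-network is a family $\mathcal N$ such that whenever $K\subset U$ with $K$ compact and $U$ open, there is a finite $\mathcal F\subset\mathcal N$ with $K\subset\bigcup\mathcal F\subset U$; an $\aleph$-space is a regular space with a $\sigma$-locally finite $k$-network; a locally convex space $E$ is a weakly $\aleph$-space if $(E,\sigma(E,E'))$ is an $\aleph$-space. *)

From Stdlib Require Import Reals List Classical.
Open Scope R_scope.
Set Implicit Arguments.

Definition set (T : Type) := T -> Prop.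
Definition fam (T : Type) := set T -> Prop.
Definition subset {T : Type} (A B : set T) : Prop := forall x, A x -> B x.
Definition union_list {T : Type} (l : list (set T)) : set T :=
  fun x => exists A, In A l /\ A x.

Record is_topology {T : Type} (op : fam T) : Prop := {
  top_full : op (fun _ => True);
  top_inter : forall U V, op U -> op V -> op (fun x => U x /\ V x);
  top_union : forall F : fam T, (forall U, F U -> op U) ->
                op (fun x => exists U, F U /\ U x) }.

Definition R_open (U : set R) : Prop :=
  forall x, U x -> exists e, 0 < e /\ forall y, Rabs (y - x) < e -> U y.

Definition continuous {T S : Type} (opT : fam T) (opS : fam S) (f : T -> S) :=
  forall V, opS V -> opT (fun x => V (f x)).

Definition compact {T : Type} (op : fam T) (K : set T) : Prop :=
  forall F : fam T, (forall U, F U -> op U) ->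
    subset K (fun x => exists U, F U /\ U x) ->
    exists l : list (set T), (forall U, In U l -> F U) /\ subset K (union_list l).

Definition closed {T : Type} (op : fam T) (A : set T) := op (fun x => ~ A x).
Definition closure {T : Type} (op : fam T) (A : set T) : set T :=
  fun x => forall U, op U -> U x -> exists y, U y /\ A y.

Definition T1 {T : Type} (op : fam T) := forall x : T, closed op (fun y => y = x).

Definition completely_regular {T : Type} (op : fam T) :=
  forall (F : set T) (x : T), closed op F -> ~ F x ->
    exists f : T -> R, continuous op R_open f /\ f x = 0 /\ forall y, F y -> f y = 1.

Definition tychonoff {T : Type} (op : fam T) :=
  is_topology op /\ T1 op /\ completely_regular op.

Definition countable {T : Type} (A : set T) : Prop :=
  exists g : nat -> option T, forall x, A x -> exists n, g n = Some x.

Definition dense {T : Type} (op : fam T) (D : set T) :=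
  forall U, op U -> (exists x, U x) -> exists x, U x /\ D x.

Definition separable {T : Type} (op : fam T) :=
  exists D : set T, countable D /\ dense op D.

Definition generated {T : Type} (S : fam T) : fam T :=
  fun U => forall x, U x -> exists l : list (set T),
    (forall A, In A l -> S A) /\ (forall A, In A l -> A x) /\
    subset (fun y => forall A, In A l -> A y) U.

Definition Cfun {X : Type} (opX : fam X) :=
  { f : X -> R | continuous opX R_open f }.

Definition compact_open {X : Type} (opX : fam X) : fam (Cfun opX) :=
  generated (fun A => exists (K : set X) (V : set R),
    compact opX K /\ R_open V /\
    A = (fun f : Cfun opX => forall x, K x -> V (proj1_sig f x))).

Definition linear_functional {X : Type} (opX : fam X) (phi : Cfun opX -> R) :=
  (forall f g h : Cfun opX,
     (forall x, proj1_sig h x = proj1_sig f x + proj1_sig g x) ->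
     phi h = phi f + phi g) /\
  (forall (a : R) (f h : Cfun opX),
     (forall x, proj1_sig h x = a * proj1_sig f x) -> phi h = a * phi f).

Definition in_dual {X : Type} (opX : fam X) (phi : Cfun opX -> R) :=
  linear_functional (opX:=opX) phi /\ continuous (@compact_open X opX) R_open phi.

Definition weak_top {X : Type} (opX : fam X) : fam (Cfun opX) :=
  generated (fun A => exists (phi : Cfun opX -> R) (V : set R),
    in_dual (opX:=opX) phi /\ R_open V /\ A = (fun f => V (phi f))).

Definition regular {T : Type} (op : fam T) :=
  T1 op /\
  forall (x : T) (U : set T), op U -> U x ->
    exists V, op V /\ V x /\ subset (closure op V) U.

Definition locally_finite {T : Type} (op : fam T) (N : fam T) :=
  forall x : T, exists U, op U /\ U x /\
    exists l : list (set T), forall A, N A -> (exists y, U y /\ A y) -> In A l.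

Definition sigma_locally_finite {T : Type} (op : fam T) (N : fam T) :=
  exists Nn : nat -> fam T,
    (forall A, N A <-> exists n, Nn n A) /\ forall n, locally_finite op (Nn n).

Definition k_network {T : Type} (op : fam T) (N : fam T) :=
  forall K U, compact op K -> op U -> subset K U ->
    exists l : list (set T), (forall A, In A l -> N A) /\
      subset K (union_list l) /\ subset (union_list l) U.

Definition aleph_space {T : Type} (op : fam T) :=
  is_topology op /\ regular op /\
  exists N : fam T, sigma_locally_finite op N /\ k_network op N.

Definition weakly_aleph {X : Type} (opX : fam X) := aleph_space (@weak_top X opX).

(* (W, lt) is order-isomorphic to [0, omega_1): a strict well-order that is
   uncountable, all of whose proper initial segments are countable. *)
Definition is_omega1 {W : Type} (lt : W -> W -> Prop) :=
  (forall x, ~ lt x x) /\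
  (forall x y z, lt x y -> lt y z -> lt x z) /\
  (forall x y, lt x y \/ x = y \/ lt y x) /\
  well_founded lt /\
  ~ countable (fun _ : W => True) /\
  (forall x, countable (fun y => lt y x)).

Definition order_topology {W : Type} (lt : W -> W -> Prop) : fam W :=
  generated (fun A => exists a, A = (fun y => lt y a) \/ A = (fun y => lt a y)).

(* If C_c(X) is weakly ℵ, then in the weak topology the zero function is a
   G_δ point, so {0} is the intersection of countably many weak
   neighbourhoods W_n of 0.  A continuous functional on C_c(X) vanishes on all
   functions vanishing on some compact set, hence each W_n contains all
   functions vanishing on a compact set K_n.  If X is not separable, the
   countable set ⋃ K_n misses a nonempty open set U, and a Urysohn function
   that is -1 at a point of U and 0 off U lies in every W_n without being 0.
   The space [0, ω₁) is zero-dimensional, hence Tychonoff, its compact sets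
   are bounded, hence countable, and it is not separable since every countable
   set of countable ordinals is bounded. *)

From Stdlib Require Import Reals Lra List Classical ClassicalEpsilon
  FunctionalExtensionality PropExtensionality Cantor.
Open Scope R_scope.

Lemma countable_subset {T : Type} (A B : set T) :
  subset A B -> countable B -> countable A.
Proof. intros HAB [g Hg]. exists g. intros x Ax. apply Hg, HAB, Ax. Qed.

Lemma countable_set0 {T : Type} (A : set T) : (forall x, ~ A x) -> countable A.
Proof. intros H. exists (fun _ => None). intros x Ax. destruct (H x Ax). Qed.

Lemma countable_setU1 {T : Type} (A : set T) (d : T) :
  countable A -> countable (fun x => x = d \/ A x).
Proof.
  intros [g Hg]. exists (fun n => match n with O => Some d | S k => g k end).
  intros x [->|Ax].
  - exists O. reflexivity.
  - destruct (Hg x Ax) as [k Hk]. exists (S k). exact Hk.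
Qed.

Lemma countable_bigcup {T : Type} (P : nat -> set T) :
  (forall n, countable (P n)) -> countable (fun x => exists n, P n x).
Proof.
  intros HP. destruct (choice (fun n g => forall x, P n x -> exists k, g k = Some x) HP)
    as [g Hg].
  exists (fun m => let p := Cantor.of_nat m in g (fst p) (snd p)).
  intros x [n Px]. destruct (Hg n x Px) as [k Hk].
  exists (Cantor.to_nat (n, k)). rewrite Cantor.cancel_of_to. exact Hk.
Qed.

Lemma countable_union_list {T : Type} (l : list (set T)) :
  (forall A, In A l -> countable A) -> countable (union_list l).
Proof.
  intros Hl.
  apply countable_subset
    with (fun x => exists n, match n with O => fun _ => False | S k => nth k l (fun _ => False) end x).
  - intros x [A [HA Ax]]. destruct (In_nth l A (fun _ => False) HA) as [k [_ Hk]].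
    exists (S k). rewrite Hk. exact Ax.
  - apply countable_bigcup. intros [|k].
    + apply countable_set0. tauto.
    + destruct (nth_in_or_default k l (fun _ => False)) as [Hk | ->].
      * apply Hl, Hk.
      * apply countable_set0. tauto.
Qed.

Lemma open_ext {T : Type} (op : fam T) (A B : set T) :
  op A -> (forall x, A x <-> B x) -> op B.
Proof.
  intros HA HAB. replace B with A; auto.
  apply functional_extensionality. intros x. apply propositional_extensionality, HAB.
Qed.

Lemma open_set0 {T : Type} (op : fam T) : is_topology op -> op (fun _ => False).
Proof.
  intros Htop. apply open_ext with (fun x => exists U, (fun _ : set T => False) U /\ U x).
  - apply (top_union Htop). tauto.
  - intros x. split; [intros [U [[] _]] | intros []].
Qed.

Lemma open_setU {T : Type} (op : fam T) (A B : set T) :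
  is_topology op -> op A -> op B -> op (fun x => A x \/ B x).
Proof.
  intros Htop HA HB. apply open_ext with (fun x => exists U, (U = A \/ U = B) /\ U x).
  - apply (top_union Htop). intros U [-> | ->]; assumption.
  - intros x. split.
    + intros [U [[-> | ->] Ux]]; auto.
    + intros [Ax|Bx]; eauto.
Qed.

Lemma is_topology_generated {T : Type} (S : fam T) : is_topology (generated S).
Proof.
  split.
  - intros x _. exists nil. split; [intros A [] | split; [intros A [] | intros y _; exact I]].
  - intros U V HU HV x [Ux Vx].
    destruct (HU x Ux) as [l1 [S1 [x1 U1]]], (HV x Vx) as [l2 [S2 [x2 V2]]].
    exists (l1 ++ l2). repeat split.
    + intros A HA. apply in_app_or in HA. destruct HA; [apply S1 | apply S2]; assumption.
    + intros A HA. apply in_app_or in HA. destruct HA; [apply x1 | apply x2]; assumption.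
    + apply U1. intros A HA. apply H, in_or_app. auto.
    + apply V2. intros A HA. apply H, in_or_app. auto.
  - intros F HF x [U [FU Ux]].
    destruct (HF U FU x Ux) as [l [Sl [xl lU]]].
    exists l. repeat split; auto. intros y Hy. exists U. auto.
Qed.

Lemma generated_subbasis {T : Type} (S : fam T) (A : set T) : S A -> generated S A.
Proof.
  intros SA x Ax. exists (A :: nil). repeat split.
  - intros B [<-|[]]. exact SA.
  - intros B [<-|[]]. exact Ax.
  - intros y Hy. apply Hy. left. reflexivity.
Qed.

Lemma not_closure {T : Type} (op : fam T) (A : set T) (z : T) :
  ~ closure op A z -> exists U, op U /\ U z /\ forall y, U y -> ~ A y.
Proof.
  intros Hc. apply NNPP. intros Hn. apply Hc. intros U HU Uz.
  apply NNPP. intros HUA. apply Hn. exists U. repeat split; auto.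
  intros y Uy Ay. apply HUA. eauto.
Qed.

Lemma compact_singleton {T : Type} (op : fam T) (x : T) : compact op (fun y => y = x).
Proof.
  intros F _ Hcov. destruct (Hcov x eq_refl) as [U [FU Ux]].
  exists (U :: nil). split.
  - intros V [<-|[]]. exact FU.
  - intros y ->. exists U. simpl. auto.
Qed.

Definition clopen {T : Type} (op : fam T) (C : set T) := op C /\ op (fun x => ~ C x).

Lemma clopen_ext {T : Type} (op : fam T) (C D : set T) :
  clopen op C -> (forall x, C x <-> D x) -> clopen op D.
Proof.
  intros [HC HCc] HCD. split.
  - apply open_ext with C; auto.
  - apply open_ext with (fun x => ~ C x); auto. intros x. rewrite (HCD x). tauto.
Qed.

Lemma clopen_setI {T : Type} (op : fam T) (C D : set T) :
  is_topology op -> clopen op C -> clopen op D -> clopen op (fun x => C x /\ D x).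
Proof.
  intros Htop [HC HCc] [HD HDc]. split.
  - apply (top_inter Htop); assumption.
  - apply open_ext with (fun x => ~ C x \/ ~ D x).
    + apply open_setU; assumption.
    + intros x. split.
      * intros [H|H] [Cx Dx]; auto.
      * intros H. destruct (classic (C x)); tauto.
Qed.

Lemma continuous_const {T : Type} (op : fam T) (c : R) :
  is_topology op -> continuous op R_open (fun _ => c).
Proof.
  intros Htop V _. destruct (classic (V c)) as [Vc|Vc].
  - apply open_ext with (fun _ => True); [apply (top_full Htop) | tauto].
  - apply open_ext with (fun _ => False); [apply open_set0, Htop | tauto].
Qed.

Lemma continuous_clopen_indicator {T : Type} (op : fam T) (C : set T) :
  is_topology op -> clopen op C ->
  continuous op R_open (fun x => if excluded_middle_informative (C x) then 0 else 1).
Proof.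
  intros Htop [HC HCc] V _.
  destruct (classic (V 0)) as [V0|V0], (classic (V 1)) as [V1|V1].
  - apply open_ext with (fun _ => True); [apply (top_full Htop) |].
    intros x. destruct (excluded_middle_informative (C x)); tauto.
  - apply open_ext with C; auto. intros x. destruct (excluded_middle_informative (C x)); tauto.
  - apply open_ext with (fun x => ~ C x); auto.
    intros x. destruct (excluded_middle_informative (C x)); tauto.
  - apply open_ext with (fun _ => False); [apply open_set0, Htop |].
    intros x. destruct (excluded_middle_informative (C x)); tauto.
Qed.

Lemma clopen_separation_completely_regular {T : Type} (op : fam T) :
  is_topology op ->
  (forall F x, closed op F -> ~ F x ->
     exists C, clopen op C /\ C x /\ forall y, C y -> ~ F y) ->
  completely_regular op.
Proof.
  intros Htop Hsep F x HF Fx. destruct (Hsep F x HF Fx) as [C [HC [Cx CF]]].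
  exists (fun y => if excluded_middle_informative (C y) then 0 else 1).
  split; [apply continuous_clopen_indicator; assumption | split].
  - destruct (excluded_middle_informative (C x)); tauto.
  - intros y Fy. destruct (excluded_middle_informative (C y)) as [Cy|]; auto.
    destruct (CF y Cy Fy).
Qed.

Lemma R_open_ball : R_open (fun y => Rabs y < 1).
Proof.
  intros x Hx. exists (1 - Rabs x). split; [lra |].
  intros y Hy. pose proof (Rabs_triang (y - x) x). replace (y - x + x) with y in * by ring.
  lra.
Qed.

Lemma R_open_affine_preimage (a b : R) (V : set R) :
  R_open V -> R_open (fun y => V (a * y + b)).
Proof.
  intros HV y Vy. destruct (HV _ Vy) as [e [He He']].
  pose proof (Rabs_pos a) as Ha.
  exists (e / (Rabs a + 1)). split; [apply Rdiv_lt_0_compat; lra |].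
  intros z Hz. apply He'.
  replace (a * z + b - (a * y + b)) with (a * (z - y)) by ring. rewrite Rabs_mult.
  assert (Hzy : Rabs (z - y) * (Rabs a + 1) < e).
  { apply Rmult_lt_compat_r with (r := Rabs a + 1) in Hz; [| lra].
    unfold Rdiv in Hz. rewrite Rmult_assoc, Rinv_l in Hz by lra. lra. }
  pose proof (Rabs_pos (z - y)). nra.
Qed.

Lemma k_network_network {T : Type} (op : fam T) (N : fam T) (x : T) (U : set T) :
  k_network op N -> op U -> U x -> exists A, N A /\ A x /\ subset A U.
Proof.
  intros Hk HU Ux.
  destruct (Hk (fun y => y = x) U (compact_singleton op x) HU) as [l [Nl [xl lU]]].
  - intros y ->. exact Ux.
  - destruct (xl x eq_refl) as [A [HA Ax]].
    exists A. repeat split; auto. intros y Ay. apply lU. exists A. auto.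
Qed.

Lemma nbhd_avoiding_list {T : Type} (op : fam T) (z : T) (l : list (set T)) :
  is_topology op ->
  exists U, op U /\ U z /\ forall A, In A l -> ~ closure op A z -> forall y, U y -> ~ A y.
Proof.
  intros Htop. induction l as [|A l [U [HU [Uz HUl]]]].
  - exists (fun _ => True). split; [apply (top_full Htop) | split; [exact I | intros A []]].
  - destruct (classic (closure op A z)) as [Hc|Hc].
    + exists U. repeat split; auto. intros B [<-|HB]; [contradiction | auto].
    + destruct (not_closure _ _ _ Hc) as [V [HV [Vz HVA]]].
      exists (fun y => U y /\ V y). split; [apply (top_inter Htop); assumption | split; auto].
      intros B [<-|HB] HBz y [Uy Vy]; eauto.
Qed.

Lemma locally_finite_avoiding_nbhd {T : Type} (op : fam T) (N : fam T) (z : T) :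
  is_topology op -> locally_finite op N ->
  exists U, op U /\ U z /\ forall A, N A -> ~ closure op A z -> forall y, U y -> ~ A y.
Proof.
  intros Htop Hlf. destruct (Hlf z) as [U [HU [Uz [l Hl]]]].
  destruct (nbhd_avoiding_list op z l Htop) as [V [HV [Vz HVl]]].
  exists (fun y => U y /\ V y). split; [apply (top_inter Htop); assumption | split; auto].
  intros A NA Az y [Uy Vy] Ay. apply (HVl A) with y; auto. apply Hl; eauto.
Qed.

(* Given y ≠ z, regularity and the network give y ∈ A ⊆ V with z ∉ cl V; if
   A ∈ N_n, the n-th neighbourhood of z avoids A, hence y. *)
Lemma aleph_point_Gdelta {T : Type} (op : fam T) (z : T) :
  aleph_space op ->
  exists U : nat -> set T, (forall n, op (U n)) /\ (forall n, U n z) /\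
    forall y, (forall n, U n y) -> y = z.
Proof.
  intros [Htop [[HT1 Hreg] [N [[Nn [HN Hlf]] Hk]]]].
  destruct (choice (fun n U => op U /\ U z /\
              forall A, Nn n A -> ~ closure op A z -> forall y, U y -> ~ A y)) as [U HU].
  { intros n. apply locally_finite_avoiding_nbhd; auto. }
  exists U. split; [intros n; apply HU | split; [intros n; apply HU |]].
  intros y Hy. apply NNPP. intros Hyz.
  destruct (Hreg y (fun x => ~ x = z) (HT1 z) Hyz) as [V [HV [Vy HVz]]].
  destruct (k_network_network _ _ _ _ Hk HV Vy) as [A [NA [Ay AV]]].
  destruct (proj1 (HN A) NA) as [n Hn].
  apply (proj2 (proj2 (HU n)) A Hn) with y; auto.
  intros HAz. apply (HVz z); [| reflexivity].
  intros W HW Wz. destruct (HAz W HW Wz) as [x [Wx Ax]]. eauto.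
Qed.

Section FunctionSpace.

Context {X : Type} (opX : fam X) (Htop : is_topology opX).

Definition constC (c : R) : Cfun opX := exist _ (fun _ => c) (continuous_const opX c Htop).

Definition affineC (a b : R) (f : Cfun opX) : Cfun opX :=
  exist (continuous opX R_open) (fun x => a * proj1_sig f x + b)
    (fun V HV => proj2_sig f _ (R_open_affine_preimage a b V HV)).

Definition vanish_on (Ks : list (set X)) (f : Cfun opX) :=
  forall K, In K Ks -> forall x, K x -> proj1_sig f x = 0.

Definition vanishing_nbhd (W : set (Cfun opX)) :=
  exists Ks, (forall K, In K Ks -> compact opX K) /\ forall f, vanish_on Ks f -> W f.

Lemma generated_vanishing_nbhd (S : fam (Cfun opX)) (W : set (Cfun opX)) :
  (forall A, S A -> A (constC 0) -> vanishing_nbhd A) ->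
  generated S W -> W (constC 0) -> vanishing_nbhd W.
Proof.
  intros HS HW W0. destruct (HW _ W0) as [l [Sl [l0 lW]]].
  assert (Hl : vanishing_nbhd (fun f => forall A, In A l -> A f)).
  { clear lW. induction l as [|A l IH].
    - exists nil. split; [intros K [] | intros f _ A []].
    - destruct IH as [Ks [HKs HKsl]]; [intros B HB; apply Sl; right; exact HB
                                       | intros B HB; apply l0; right; exact HB |].
      destruct (HS A) as [Ks' [HKs' HKs'A]]; [apply Sl; left; reflexivity
                                             | apply l0; left; reflexivity |].
      exists (Ks' ++ Ks). split.
      + intros K HK. apply in_app_or in HK. destruct HK; auto.
      + intros f Hf B [<-|HB].
        * apply HKs'A. intros K HK. apply Hf, in_or_app. auto.
        * apply HKsl; auto. intros K HK. apply Hf, in_or_app. auto. }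
  destruct Hl as [Ks [HKs HKsl]]. exists Ks. split; auto.
  intros f Hf. apply lW, HKsl, Hf.
Qed.

Lemma compact_open_vanishing_nbhd (W : set (Cfun opX)) :
  @compact_open X opX W -> W (constC 0) -> vanishing_nbhd W.
Proof.
  apply generated_vanishing_nbhd. intros A [K [V [HK [_ ->]]]] A0.
  exists (K :: nil). split; [intros K' [<-|[]]; exact HK |].
  intros f Hf x Kx. rewrite (Hf K (or_introl eq_refl) x Kx). exact (A0 x Kx).
Qed.

(* phi is bounded by 1 on a compact-open neighbourhood of 0 containing the
   linear subspace of functions vanishing on Ks, so it vanishes there. *)
Lemma dual_vanishing (phi : Cfun opX -> R) :
  in_dual phi ->
  exists Ks, (forall K, In K Ks -> compact opX K) /\ forall f, vanish_on Ks f -> phi f = 0.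
Proof.
  intros [[_ Hscale] Hcont].
  assert (phi0 : phi (constC 0) = 0).
  { rewrite (Hscale 0 (constC 0) (constC 0)); [ring | intros x; simpl; ring]. }
  destruct (compact_open_vanishing_nbhd _ (Hcont _ R_open_ball))
    as [Ks [HKs Hball]]; [rewrite phi0, Rabs_R0; lra |].
  exists Ks. split; auto. intros f Hf. apply NNPP. intros Hphi.
  pose (g := affineC (2 / phi f) 0 f).
  assert (Hg : Rabs (phi g) < 1).
  { apply Hball. intros K HK x Kx. simpl. rewrite (Hf K HK x Kx). ring. }
  rewrite (Hscale (2 / phi f) f g) in Hg by (intros x; simpl; ring).
  replace (2 / phi f * phi f) with 2 in Hg by (field; exact Hphi).
  rewrite Rabs_right in Hg; lra.
Qed.

Lemma weak_vanishing_nbhd (W : set (Cfun opX)) :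
  @weak_top X opX W -> W (constC 0) -> vanishing_nbhd W.
Proof.
  apply generated_vanishing_nbhd. intros A [phi [V [Hphi [_ ->]]]] A0.
  destruct (dual_vanishing _ Hphi) as [Ks [HKs Hvan]].
  exists Ks. split; auto. intros f Hf.
  rewrite (Hvan f Hf), <- (Hvan (constC 0)); [exact A0 |].
  intros K _ x _. reflexivity.
Qed.

End FunctionSpace.

Theorem weakly_aleph_separable (X : Type) (opX : fam X) :
  tychonoff opX -> (forall K : set X, compact opX K -> countable K) ->
  weakly_aleph opX -> separable opX.
Proof.
  intros [Htop [_ Hcreg]] Hcc Hwa.
  destruct (aleph_point_Gdelta _ (constC opX Htop 0) Hwa) as [W [HW [W0 HW0]]].
  destruct (choice (fun n Ks => (forall K, In K Ks -> compact opX K) /\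
                      forall f, vanish_on opX Ks f -> W n f)) as [Ks HKs].
  { intros n. exact (weak_vanishing_nbhd opX Htop _ (HW n) (W0 n)). }
  exists (fun x => exists n, union_list (Ks n) x). split.
  - apply countable_bigcup. intros n. apply countable_union_list.
    intros K HK. apply Hcc, (proj1 (HKs n)), HK.
  - intros U HU [x Ux]. apply NNPP. intros HUD.
    destruct (Hcreg (fun y => ~ U y) x) as [f [Hf [fx fU]]].
    + unfold closed. apply open_ext with U; [exact HU |]. intros y. split; [tauto | apply NNPP].
    + tauto.
    + pose (h := affineC opX 1 (-1) (exist _ f Hf : Cfun opX)).
      assert (Hh : h = constC opX Htop 0).
      { apply HW0. intros n. apply (proj2 (HKs n)). intros K HK y Ky. simpl.
        rewrite fU; [ring |]. intros Uy. apply HUD. exists y. split; [exact Uy |].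
        exists n, K. auto. }
      assert (Hhx : proj1_sig h x = 0) by (rewrite Hh; reflexivity).
      simpl in Hhx. lra.
Qed.

Lemma wf_minimal {T : Type} (R : T -> T -> Prop) (P : T -> Prop) :
  well_founded R -> (exists x, P x) -> exists m, P m /\ forall z, P z -> ~ R z m.
Proof.
  intros Hwf [x Px]. apply NNPP. intros Hn. revert Px.
  induction x as [x IH] using (well_founded_ind Hwf).
  intros Px. apply Hn. exists x. split; auto. intros z Pz Hz. exact (IH z Hz Pz).
Qed.

Section Omega1.

Context {W : Type} (lt : W -> W -> Prop).
Hypothesis lt_irrefl : forall x, ~ lt x x.
Hypothesis lt_trans : forall x y z, lt x y -> lt y z -> lt x z.
Hypothesis lt_total : forall x y, lt x y \/ x = y \/ lt y x.
Hypothesis lt_wf : well_founded lt.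
Hypothesis W_uncountable : ~ countable (fun _ : W => True).
Hypothesis lt_segment_countable : forall x, countable (fun y => lt y x).

Lemma lt_asym {x y : W} : lt x y -> ~ lt y x.
Proof. intros Hxy Hyx. apply (lt_irrefl x), lt_trans with y; assumption. Qed.

Lemma lt_no_max w : exists s, lt w s.
Proof.
  apply NNPP. intros Hn. apply W_uncountable.
  apply countable_subset with (fun x => x = w \/ lt x w).
  - intros x _. destruct (lt_total x w) as [H|[H|H]]; auto. destruct Hn. eauto.
  - apply countable_setU1, lt_segment_countable.
Qed.

Lemma lt_succ w : exists s, lt w s /\ forall z, lt z s -> z = w \/ lt z w.
Proof.
  destruct (wf_minimal lt (fun s => lt w s) lt_wf (lt_no_max w)) as [s [Hws Hs]].
  exists s. split; auto. intros z Hzs.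
  destruct (lt_total z w) as [H|[H|H]]; auto. destruct (Hs z H Hzs).
Qed.

(* If D were unbounded, every b would be ≤ some element of D, making W a
   countable union of initial segments. *)
Lemma countable_bounded (D : set W) : countable D -> exists b, forall d, D d -> lt d b.
Proof.
  intros [g Hg]. apply NNPP. intros Hnb. apply W_uncountable.
  apply countable_subset with (fun b => exists n,
    match g n with Some d => fun b => b = d \/ lt b d | None => fun _ => False end b).
  - intros b _. apply NNPP. intros Hb. apply Hnb. exists b. intros d Dd.
    destruct (Hg d Dd) as [n Hn].
    destruct (lt_total d b) as [H|[H|H]]; auto; destruct Hb; exists n; rewrite Hn; auto.
  - apply countable_bigcup. intros n. destruct (g n) as [d|].
    + apply countable_setU1, lt_segment_countable.
    + apply countable_set0. tauto.
Qed.

Lemma open_ray_lt a : order_topology lt (fun y => lt y a).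
Proof. apply generated_subbasis. exists a. left. reflexivity. Qed.

Lemma open_ray_gt a : order_topology lt (fun y => lt a y).
Proof. apply generated_subbasis. exists a. right. reflexivity. Qed.

Lemma order_T1 : T1 (order_topology lt).
Proof.
  intros x. unfold closed. apply open_ext with (fun y => lt y x \/ lt x y).
  - apply open_setU; [apply is_topology_generated | apply open_ray_lt | apply open_ray_gt].
  - intros y. split.
    + intros [H|H] ->; exact (lt_irrefl x H).
    + intros Hyx. destruct (lt_total y x) as [H|[H|H]]; tauto.
Qed.

Lemma clopen_ray_gt a : clopen (order_topology lt) (fun y => lt a y).
Proof.
  split; [apply open_ray_gt |].
  destruct (lt_succ a) as [s [Has Hs]].
  apply open_ext with (fun y => lt y s); [apply open_ray_lt |].
  intros y. split.
  - intros Hys Hay. destruct (Hs y Hys) as [->|H]; [exact (lt_irrefl a Hay) | exact (lt_asym H Hay)].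
  - intros Hay. destruct (lt_total y s) as [H|[->|H]]; auto; destruct Hay; eauto.
Qed.

Lemma clopen_ray_le x : clopen (order_topology lt) (fun z => z = x \/ lt z x).
Proof.
  destruct (lt_succ x) as [s [Hxs Hs]]. split.
  - apply open_ext with (fun z => lt z s); [apply open_ray_lt |].
    intros z. split; [apply Hs | intros [->|H]; eauto].
  - apply open_ext with (fun z => lt x z); [apply open_ray_gt |].
    intros z. split.
    + intros Hxz [->|H]; [exact (lt_irrefl x Hxz) | exact (lt_asym H Hxz)].
    + intros H. destruct (lt_total z x) as [H'|[H'|H']]; tauto.
Qed.

(* Rays (-∞, a) ∋ x are redundant below x, and rays (a, +∞) are clopen. *)
Lemma clopen_basic_nbhd (x : W) (l : list (set W)) :
  (forall A, In A l -> exists a, A = (fun y => lt y a) \/ A = (fun y => lt a y)) ->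
  (forall A, In A l -> A x) ->
  clopen (order_topology lt) (fun z => (z = x \/ lt z x) /\ forall A, In A l -> A z).
Proof.
  induction l as [|A l IH]; intros Hl lx.
  - apply clopen_ext with (1 := clopen_ray_le x). intros z. simpl. intuition.
  - specialize (IH (fun B HB => Hl B (or_intror HB)) (fun B HB => lx B (or_intror HB))).
    pose proof (lx A (or_introl eq_refl)) as Ax.
    destruct (Hl A (or_introl eq_refl)) as [a [-> | ->]]; simpl in Ax.
    + apply clopen_ext with (1 := IH). intros z. split.
      * intros [Hz Hzl]. split; [exact Hz |]. intros B [<-|HB]; [| apply Hzl, HB].
        destruct Hz as [->|H]; [exact Ax | apply lt_trans with x; assumption].
      * intros [Hz Hzl]. split; [exact Hz |]. intros B HB. apply Hzl. right. exact HB.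
    + apply clopen_ext with (1 := clopen_setI _ _ _ (is_topology_generated _) (clopen_ray_gt a) IH).
      intros z. split.
      * intros [Haz [Hz Hzl]]. split; [exact Hz |]. intros B [<-|HB]; [exact Haz | apply Hzl, HB].
      * intros [Hz Hzl]. split; [apply Hzl; left; reflexivity |].
        split; [exact Hz |]. intros B HB. apply Hzl. right. exact HB.
Qed.

Lemma order_completely_regular : completely_regular (order_topology lt).
Proof.
  apply clopen_separation_completely_regular; [apply is_topology_generated |].
  intros F x HF Fx. destruct (HF x Fx) as [l [Hl [lx lF]]].
  exists (fun z => (z = x \/ lt z x) /\ forall A, In A l -> A z).
  split; [apply clopen_basic_nbhd; assumption | split].
  - split; auto.
  - intros y [_ Hy]. apply lF, Hy.
Qed.

Lemma order_tychonoff : tychonoff (order_topology lt).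
Proof.
  split; [apply is_topology_generated | split; [apply order_T1 | apply order_completely_regular]].
Qed.

Lemma rays_bounded (d : W) (l : list (set W)) :
  (forall U, In U l -> exists w, U = (fun y => lt y w)) ->
  exists b, forall y, union_list l y -> lt y b.
Proof.
  induction l as [|U l IH]; intros Hl.
  - exists d. intros y [U [[] _]].
  - destruct IH as [b Hb]; [intros V HV; apply Hl; right; exact HV |].
    destruct (Hl U (or_introl eq_refl)) as [w ->].
    destruct (lt_total w b) as [H|[<-|H]].
    + exists b. intros y [V [[<-|HV] Vy]].
      * apply lt_trans with w; assumption.
      * apply Hb. exists V. auto.
    + exists w. intros y [V [[<-|HV] Vy]]; [exact Vy |].
      apply Hb. exists V. auto.
    + exists w. intros y [V [[<-|HV] Vy]]; [exact Vy |].
      apply lt_trans with b; [| exact H]. apply Hb. exists V. auto.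
Qed.

Lemma order_compact_countable (K : set W) : compact (order_topology lt) K -> countable K.
Proof.
  intros HK. destruct (classic (exists d, K d)) as [[d _]|HK0].
  2:{ apply countable_set0. intros x Kx. apply HK0. eauto. }
  destruct (HK (fun U => exists w, U = (fun y => lt y w))) as [l [Hl Kl]].
  - intros U [w ->]. apply open_ray_lt.
  - intros y _. destruct (lt_no_max y) as [s Hs]. exists (fun z => lt z s). eauto.
  - destruct (rays_bounded d l Hl) as [b Hb].
    apply countable_subset with (fun y => lt y b); [| apply lt_segment_countable].
    intros y Ky. apply Hb, Kl, Ky.
Qed.

Lemma order_not_separable : ~ separable (order_topology lt).
Proof.
  intros [D [HD Hdense]]. destruct (countable_bounded _ HD) as [b Hb].
  destruct (lt_no_max b) as [s Hs].
  destruct (Hdense _ (open_ray_gt b) (ex_intro _ s Hs)) as [y [Hby Dy]].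
  exact (lt_asym (Hb y Dy) Hby).
Qed.

End Omega1.

Theorem lemma6p2 :
  (forall (X : Type) (opX : fam X),
     tychonoff opX ->
     (forall K : set X, compact opX K -> countable K) ->
     weakly_aleph opX ->
     separable opX) /\
  (forall (W : Type) (lt : W -> W -> Prop),
     is_omega1 lt -> ~ weakly_aleph (order_topology lt)).
Proof.
  split; [exact weakly_aleph_separable |].
  intros W lt [Hirr [Htrans [Htot [Hwf [Hunc Hseg]]]]] Hwa.
  apply (order_not_separable lt Hirr Htrans Htot Hunc Hseg).
  apply weakly_aleph_separable; [| | exact Hwa].
  - exact (order_tychonoff lt Hirr Htrans Htot Hwf Hunc Hseg).
  - exact (order_compact_countable lt Htrans Htot Hunc Hseg).
Qed.
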